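(* The approximation guarantee $(1/n)^n$ of the generalized student-proposing deferred acceptance algorithm with the HERF method is tight even when $|F|=2$: for every number of students $n$, the infimum over instances with $n$ students and $|F|=2$ of $\mathsf{ProS}(\mathsf{Alg}(\mathcal I);\mathcal I)/\max_\pi\mathsf{ProS}(\pi;\mathcal I)$ is at most $(1/n)^n$.
   Context: Model: students $N$ ($|N|=n$); colleges $M$, each college $c$ with positive integer capacity $x_c$ and strict preference $\succ_c$ over $N$; features $F$; utilities $u_s^f:M\to[0,1]$; for each student $s$ an independent distribution $\mu_s$ over weight vectors $w_s$ ($w_s^f\ge0$, $\sum_f w_s^f=1$). For realized $w_s$, $c\succeq_s^{w_s}c'$ iff $\sum_f w_s^fu_s^f(c)\ge\sum_f w_s^fu_s^f(c')$, strict version $\succ_s^{w_s}$; $\mathsf{null}$ ranked below any college. A matching $\pi$ gives each student at most one college and each college at most $x_c$ students; it is (weakly) stable for realized weights if no pair $(s,c)$ has $c\succ_s^{w_s}\pi(s)$ and either $|\pi(c)|<x_c$ or some $s'\in\pi(c)$ with $s\succ_c s'$. $\mathsf{ProS}(\pi;\mathcal I)$ = probability over independent $w_s\sim\mu_s$ that $\pi$ is stable. Generalized student-proposing DA: all students start unmatched with $R_s=\emptyset$; while some unmatched student $s$ has $R_s\ne M$, each such student proposes to $\mathsf{Next}(s,R_s)\notin R_s$; each college keeps its $x_c$ most preferred students among those it holds and its new proposers and rejects the rest (rejected students add the college to $R_s$ and become unmatched). HERF: $\mathsf{Next}$ returns a college in $\arg\max_{c\notin R_s}\Pr[c\succeq_s^{w_s}c'\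 \forall c'\notin R_s,c'\ne c]$. *)

From HB Require Import structures.
From mathcomp Require Import all_boot all_order all_algebra.
From mathcomp Require Import perm reals.
Set Implicit Arguments. Unset Strict Implicit. Unset Printing Implicit Defensive.
Import Order.TTheory GRing.Theory Num.Theory.
Local Open Scope ring_scope.

(* Students are 'I_n, colleges are 'I_m, features are 'I_2 (|F| = 2).
   Each student's weight distribution mu_s is finitely supported: it puts
   probability [pr s k] on the weight vector [wt s k] (k : 'I_K). *)
Record instance (R : realType) (n m K : nat) := Instance {
  cap : 'I_m -> nat;
  cap_pos : forall c, (0 < cap c)%N;
  (* college c prefers s to s' iff crank c s < crank c s' (strict total order) *)
  crank : 'I_m -> {perm 'I_n};
  util : 'I_n -> 'I_2 -> 'I_m -> R;
  util_01 : forall s f c, 0 <= util s f c <= 1;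
  wt : 'I_n -> 'I_K -> 'I_2 -> R;
  wt_ge0 : forall s k f, 0 <= wt s k f;
  wt_sum1 : forall s k, \sum_(f < 2) wt s k f = 1;
  pr : 'I_n -> 'I_K -> R;
  pr_ge0 : forall s k, 0 <= pr s k;
  pr_sum1 : forall s, \sum_(k < K) pr s k = 1
}.

Section Model.
Variables (R : realType) (n m K : nat) (I : instance R n m K).

Definition cprefers (c : 'I_m) (s s' : 'I_n) : bool :=
  (crank I c s < crank I c s')%N.

Definition uval (s : 'I_n) (w : 'I_2 -> R) (c : 'I_m) : R :=
  \sum_(f < 2) w f * util I s f c.

(* weak preference over colleges-or-null (None = null, ranked below all) *)
Definition sweak (s : 'I_n) (w : 'I_2 -> R) (a b : option 'I_m) : bool :=
  match a, b with
  | _, None => true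
  | None, Some _ => false
  | Some c, Some c' => uval s w c' <= uval s w c
  end.

Definition sstrict (s : 'I_n) (w : 'I_2 -> R) (a b : option 'I_m) : bool :=
  match a, b with
  | None, _ => false
  | Some _, None => true
  | Some c, Some c' => uval s w c' < uval s w c
  end.

Definition matching := {ffun 'I_n -> option 'I_m}.

Definition assigned (pi : matching) (c : 'I_m) : {set 'I_n} :=
  [set s | pi s == Some c].

Definition is_matching (pi : matching) : bool :=
  [forall c, (#|assigned pi c| <= cap I c)%N].

(* a realized weight profile: student s draws support point k s *)
Definition profile := {ffun 'I_n -> 'I_K}.

Definition stable (pi : matching) (k : profile) : bool :=
  [forall s, forall c,
     ~~ (sstrict s (wt I s (k s)) (Some c) (pi s) &&
         ((#|assigned pi c| < cap I c)%N ||
          [exists s', (pi s' == Some c) && cprefers c s s']))].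

Definition prob_profile (k : profile) : R := \prod_(s < n) pr I s (k s).

Definition ProS (pi : matching) : R :=
  \sum_(k : profile) prob_profile k * (stable pi k)%:R.

Definition MaxProS : R :=
  \big[Num.max/0]_(pi : matching | is_matching pi) ProS pi.

Definition herf_score (s : 'I_n) (Rs : {set 'I_m}) (c : 'I_m) : R :=
  \sum_(k < K) pr I s k *
    [forall c', (c' \notin Rs) ==> (c' != c) ==>
                 sweak s (wt I s k) (Some c) (Some c')]%:R.

(* Next : a HERF-consistent choice (any tie-breaking) *)
Definition HERF (Next : 'I_n -> {set 'I_m} -> option 'I_m) : Prop :=
  forall s Rs, Rs != setT ->
    exists c, [/\ Next s Rs = Some c, c \notin Rs &
                  forall c', c' \notin Rs -> herf_score s Rs c' <= herf_score s Rs c].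

(* DA state: rejection sets R_s and current tentative assignment *)
Definition state := ({ffun 'I_n -> {set 'I_m}} * matching)%type.

Definition init_state : state := ([ffun _ => set0], [ffun _ => None]).

Section Step.
Variable Next : 'I_n -> {set 'I_m} -> option 'I_m.

(* college that s is held by or proposes to in this round *)
Definition cand (st : state) (s : 'I_n) : option 'I_m :=
  match st.2 s with
  | Some c => Some c
  | None => if st.1 s != setT then Next s (st.1 s) else None
  end.

Definition cands (st : state) (c : 'I_m) : {set 'I_n} :=
  [set s | cand st s == Some c].

Definition kept (st : state) (c : 'I_m) (s : 'I_n) : bool :=
  (#|[set s' in cands st c | cprefers c s' s]| < cap I c)%N.

Definition step (st : state) : state :=
  ([ffun s => match cand st s with
              | Some c => if kept st c s then st.1 s else c |: st.1 s
              | None => st.1 s end],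
   [ffun s => match cand st s with
              | Some c => if kept st c s then Some c else None
              | None => None end]).

Definition terminal (st : state) : bool :=
  [forall s, ~~ ((st.2 s == None) && (st.1 s != setT))].

Definition DA_output (pi : matching) : Prop :=
  exists t, terminal (iter t step init_state) /\ (iter t step init_state).2 = pi.
End Step.

End Model.

(* Take n students and n colleges on a line at positions c/n, with two features
   whose convex combinations produce single-peaked utilities.  Each student's peak
   is uniform over the colleges except for an extra mass d on her own college.
   HERF therefore sends every student to her own college first, and DA stops there
   at once; that matching is stable only if every student's realized peak is her
   own college, which has probability ((1-d)/n + d)^n.  The colleges' rankings are
   cyclic shifts, so the matching that shifts every student by one gives each
   college its favourite student and is stable with probability 1.  Letting d go
   to 0 gives the ratio (1/n)^n. *)
From HB Require Import structures.
From mathcomp Require Import all_boot all_order all_algebra.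
From mathcomp Require Import perm reals.
From mathcomp Require Import ring lra.
Import Order.TTheory GRing.Theory Num.Theory.
Local Open Scope ring_scope.
Set Implicit Arguments. Unset Strict Implicit.

Lemma subrXX_le (R : realDomainType) (a b : R) (j : nat) :
  0 <= a -> a <= b -> b <= 1 -> b ^+ j - a ^+ j <= j%:R * (b - a).
Proof.
move=> a0 ab b1; have b0 := le_trans a0 ab.
rewrite subrXX mulrC ler_wpM2r ?subr_ge0 // -[j in j%:R]card_ord -sumr_const.
apply: ler_sum => i _; apply: mulr_ile1; rewrite ?exprn_ge0 ?exprn_ile1 //.
exact: le_trans b1.
Qed.

Section TightInstance.
Variables (R : realType) (n' : nat) (d : R).
Hypotheses (d_gt0 : 0 < d) (d_le1 : d <= 1).
Local Notation N := n'.+1.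

(* Support point [k < N] of student [s] peaks at college [k]; the extra point
   [ord_max] peaks at [s] itself. *)
Definition peak (s : 'I_N) (k : 'I_N.+1) : 'I_N := insubd s (val k).

Definition loc (c : 'I_N) : R := (val c)%:R / N%:R.

(* With weights (x, 1 - x) these give the utility (1 + x^2 - (x - loc c)^2) / 2,
   which peaks at the college located at x. *)
Definition tight_util (s : 'I_N) (f : 'I_2) (c : 'I_N) : R :=
  if val f == 0%N then (1 + 2 * loc c - loc c ^+ 2) / 2 else (1 - loc c ^+ 2) / 2.

Definition tight_wt (s : 'I_N) (k : 'I_N.+1) (f : 'I_2) : R :=
  if val f == 0%N then loc (peak s k) else 1 - loc (peak s k).

Definition tight_pr (s : 'I_N) (k : 'I_N.+1) : R :=
  if (val k < N)%N then (1 - d) / N%:R else d.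

(* College [c] ranks [s] at position [s - c - 1]: it likes [c + 1] best and [c] least. *)
Definition tight_crank (c : 'I_N) : {perm 'I_N} := perm (@addIr _ (ord_max - c)).

Lemma loc01 c : 0 <= loc c <= 1.
Proof.
rewrite divr_ge0 ?ler0n //= ler_pdivrMr ?ltr0n // mul1r ler_nat.
exact: ltnW (ltn_ord c).
Qed.

Lemma tight_util01 s f c : 0 <= tight_util s f c <= 1.
Proof.
have /andP[l0 l1] := loc01 c; have sq_le : loc c ^+ 2 <= loc c by rewrite expr2; nra.
by rewrite /tight_util; case: ifP => _; apply/andP; split; rewrite -?expr2; nra.
Qed.

Lemma tight_wt_ge0 s k f : 0 <= tight_wt s k f.
Proof. by have := loc01 (peak s k); rewrite /tight_wt; case: ifP => _; lra. Qed.

Lemma tight_wt_sum1 s k : \sum_(f < 2) tight_wt s k f = 1.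
Proof. by rewrite !big_ord_recl big_ord0 /tight_wt /=; lra. Qed.

Lemma tight_pr_ge0 s k : 0 <= tight_pr s k.
Proof. by rewrite /tight_pr; case: ifP => _; rewrite ?divr_ge0 ?ler0n ?subr_ge0 // ltW. Qed.

Lemma tight_pr_max s : tight_pr s ord_max = d.
Proof. by rewrite /tight_pr /= ltnn. Qed.

Lemma tight_pr_widen s (i : 'I_N) : tight_pr s (widen_ord (leqnSn N) i) = (1 - d) / N%:R.
Proof. by rewrite /tight_pr /= ltn_ord. Qed.

Lemma tight_pr_sum1 s : \sum_(k < N.+1) tight_pr s k = 1.
Proof.
rewrite big_ord_recr /= tight_pr_max.
under eq_bigr do rewrite tight_pr_widen.
rewrite sumr_const card_ord -[_ *+ N]mulr_natr divfK ?subrK // pnatr_eq0 //.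
Qed.

Definition tight_instance : instance R N N N.+1 :=
  @Instance R N N N.+1 (fun=> 1%N) (fun=> isT) tight_crank tight_util tight_util01
    tight_wt tight_wt_ge0 tight_wt_sum1 tight_pr tight_pr_ge0 tight_pr_sum1.

Local Notation I := tight_instance.

Lemma uval_tight s k c :
  uval I s (wt I s k) c = (1 + loc (peak s k) ^+ 2 - (loc (peak s k) - loc c) ^+ 2) / 2.
Proof. by rewrite /uval /= !big_ord_recl big_ord0 /tight_wt /tight_util /=; field. Qed.

Lemma loc_inj : injective loc.
Proof.
move=> a b /eqP; rewrite /loc (inj_eq (mulIf _)) ?invr_eq0 ?pnatr_eq0 //.
by rewrite eqr_nat => /eqP /val_inj.
Qed.

Lemma uval_lt_peak s k c : c != peak s k ->
  uval I s (wt I s k) c < uval I s (wt I s k) (peak s k).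
Proof.
move=> /negPf c_peak; rewrite !uval_tight subrr expr0n /=.
have : 0 < (loc (peak s k) - loc c) ^+ 2.
  by rewrite exprn_even_gt0 //= subr_eq0 (inj_eq loc_inj) eq_sym c_peak.
lra.
Qed.

Lemma peak_max s : peak s ord_max = s.
Proof. by apply: val_inj; rewrite /peak val_insubd /= ltnn. Qed.

Lemma peak_widen s (i : 'I_N) : peak s (widen_ord (leqnSn N) i) = i.
Proof. by apply: val_inj; rewrite /peak val_insubd /= ltn_ord. Qed.

Lemma weak_top_peak s k c :
  [forall c', (c' \notin set0) ==> (c' != c) ==>
     sweak I s (wt I s k) (Some c) (Some c')] = (c == peak s k).
Proof.
apply/forallP/eqP => [top|->]; last first.
  move=> c'; rewrite in_set0 /=; apply/implyP => _.
  by have [->|/uval_lt_peak/ltW] := eqVneq c' (peak s k).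
apply/eqP/negPn/negP => c_peak; have := top (peak s k).
by rewrite in_set0 eq_sym c_peak /= leNgt uval_lt_peak.
Qed.

Lemma prob_peakE s c :
  \sum_(k < N.+1) tight_pr s k * (c == peak s k)%:R = (1 - d) / N%:R + d * (c == s)%:R.
Proof.
rewrite big_ord_recr /= tight_pr_max peak_max; congr (_ + _).
under eq_bigr do rewrite tight_pr_widen peak_widen.
rewrite (bigD1 c) //= eqxx mulr1 big1 ?addr0 // => i /negPf i_c.
by rewrite eq_sym i_c mulr0.
Qed.

Lemma herf_score_tight s c :
  herf_score I s set0 c = (1 - d) / N%:R + d * (c == s)%:R.
Proof. by rewrite -prob_peakE; apply: eq_bigr => k _; rewrite weak_top_peak. Qed.

Lemma set0_neqT : (set0 : {set 'I_N}) != setT.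
Proof. by apply/eqP => /setP /(_ ord0); rewrite !inE. Qed.

Lemma HERF_first_own Next : HERF I Next -> forall s, Next s set0 = Some s.
Proof.
move=> herf s; have [c [-> _ c_max]] := herf s _ set0_neqT.
have := c_max s; rewrite in_set0 !herf_score_tight eqxx => /(_ isT).
have [->//|_] := eqVneq c s.
by rewrite mulr1 lerD2l ler_pMr // ler1n.
Qed.

Lemma cprefers_self c s : s != c -> cprefers I c s c.
Proof.
move=> s_c; have rank_c : tight_crank c c = ord_max by rewrite permE /= addrC subrK.
have : tight_crank c s != tight_crank c c by rewrite (inj_eq perm_inj).
by rewrite /cprefers /= rank_c ltn_neqAle -ltnS ltn_ord andbT.
Qed.

Definition pi_shift : matching N N := [ffun s => Some (s + ord_max)].
Definition pi_own : matching N N := [ffun s => Some s].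

Lemma assigned_pi_shift c : assigned pi_shift c = [set c - ord_max].
Proof.
apply/setP => s; rewrite !inE ffunE.
by apply/eqP/eqP => [[<-]|->]; rewrite ?addrK ?subrK.
Qed.

Lemma pi_shift_matching : is_matching I pi_shift.
Proof. by apply/forallP => c; rewrite assigned_pi_shift cards1. Qed.

Lemma tight_crank_shift s : tight_crank (s + ord_max) s = 0.
Proof. by rewrite permE /= addrA subrr. Qed.

Lemma stable_pi_shift k : stable I pi_shift k.
Proof.
apply/forallP => s; apply/forallP => c; apply/nandP; right.
rewrite negb_or assigned_pi_shift cards1 ltnn /=; apply/existsP => -[s'].
by rewrite ffunE /cprefers /= => /andP[/eqP[<-]]; rewrite tight_crank_shift.
Qed.

Lemma ProS_pi_shift : ProS I pi_shift = 1.
Proof.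
rewrite /ProS; under eq_bigr do rewrite stable_pi_shift mulr1.
by rewrite -(bigA_distr_bigA tight_pr) big1 // => s _; rewrite tight_pr_sum1.
Qed.

Lemma MaxProS_ge1 : 1 <= MaxProS I.
Proof. by rewrite -ProS_pi_shift; apply: le_bigmax_cond pi_shift_matching. Qed.

Definition proposed_own : state N N := ([ffun=> set0], pi_own).

Lemma step_proposed_own Next st : st.1 = [ffun=> set0] ->
  (forall s, cand Next st s = Some s) -> step I Next st = proposed_own.
Proof.
move=> no_rejections cand_own.
have kept_own s : kept I Next st s s.
  rewrite /kept; suff -> : [set s' in cands Next st s | cprefers I s s' s] = set0.
    by rewrite cards0.
  apply/setP => s'; rewrite !inE cand_own /cprefers.
  by case: eqP => [[->]|]; rewrite ?ltnn.
congr pair; apply/ffunP => s; rewrite !ffunE cand_own kept_own //.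
by rewrite no_rejections ffunE.
Qed.

Lemma iter_DA_own Next : (forall s, Next s set0 = Some s) ->
  forall t, iter t.+1 (step I Next) (init_state N N) = proposed_own.
Proof.
move=> first_own; elim=> [|t IHt].
  by apply: step_proposed_own => // s; rewrite /cand /= !ffunE set0_neqT first_own.
by rewrite iterS IHt; apply: step_proposed_own => // s; rewrite /cand /= ffunE.
Qed.

Lemma DA_output_own Next pi : HERF I Next -> DA_output I Next pi -> pi = pi_own.
Proof.
move=> /HERF_first_own first_own [[|t] [term <-]]; last by rewrite iter_DA_own.
by move/forallP: term => /(_ ord0); rewrite /= !ffunE set0_neqT.
Qed.

Lemma stable_pi_own_peak k s : stable I pi_own k -> s = peak s (k s).
Proof.
move=> /forallP /(_ s) /forallP /(_ (peak s (k s))) /negP no_block.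
apply/eqP/negPn/negP => s_peak; apply: no_block; apply/andP; split.
  by rewrite ffunE /= uval_lt_peak // eq_sym.
apply/orP; right; apply/existsP; exists (peak s (k s)).
by rewrite ffunE eqxx cprefers_self.
Qed.

Lemma ProS_pi_own : ProS I pi_own <= ((1 - d) / N%:R + d) ^+ N.
Proof.
rewrite /ProS /prob_profile.
apply: (@le_trans _ _ (\sum_(k : profile N N.+1)
    \prod_(s < N) (tight_pr s (k s) * (s == peak s (k s))%:R))).
  apply: ler_sum => k _; have [stab|_] := boolP (stable I pi_own k).
    rewrite mulr1 [X in _ <= X](eq_bigr (fun s => tight_pr s (k s))) // => s _.
    by rewrite -(stable_pi_own_peak s stab) eqxx mulr1.
  by rewrite mulr0 prodr_ge0 // => s _; rewrite mulr_ge0 ?ler0n ?tight_pr_ge0.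
rewrite -(bigA_distr_bigA (fun s k => tight_pr s k * (s == peak s k)%:R)) /=.
by under eq_bigr do rewrite prob_peakE eqxx mulr1; rewrite prodr_const card_ord.
Qed.

Lemma ProS_pi_own_le : ProS I pi_own <= (1 / N%:R) ^+ N + N%:R * d.
Proof.
have N_gt0 : (0 : R) < N%:R by rewrite ltr0n.
set a : R := 1 / N%:R.
have a_ge0 : 0 <= a by rewrite divr_ge0 ?ler0n.
have a_le1 : a <= 1 by rewrite ler_pdivrMr // mul1r ler1n.
have split_d : (1 - d) / N%:R + d = a + d * (1 - a) by rewrite /a; field; lra.
have da_ge0 : 0 <= d * a by rewrite mulr_ge0 // ltW.
have d1a_ge0 : 0 <= d * (1 - a) by rewrite mulr_ge0 ?subr_ge0 // ltW.
have d1a_le : d * (1 - a) <= 1 - a by rewrite ler_piMl ?subr_ge0.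
apply: le_trans ProS_pi_own _; rewrite -lerBlDl split_d.
apply: le_trans (subrXX_le _ a_ge0 _ _) _; rewrite ?ler_pM2l //; lra.
Qed.

End TightInstance.

Theorem proposition3 (R : realType) (n : nat) (hn : (0 < n)%N)
    (eps : R) (heps : 0 < eps) :
  exists (m K : nat) (I : instance R n m K),
    0 < MaxProS I /\
    forall Next : 'I_n -> {set 'I_m} -> option 'I_m, HERF I Next ->
    forall pi : matching n m, DA_output I Next pi ->
      ProS I pi <= ((1 / n%:R) ^+ n + eps) * MaxProS I.
Proof.
case: n hn => // n' _.
have N_gt0 : (0 : R) < n'.+1%:R by rewrite ltr0n.
pose d := Num.min (eps / n'.+1%:R) 1.
have d_gt0 : 0 < d by rewrite lt_min ltr01 andbT divr_gt0.
have d_le1 : d <= 1 by rewrite ge_min lexx orbT.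
have Nd_le_eps : n'.+1%:R * d <= eps.
  by rewrite mulrC -ler_pdivlMr // ge_min lexx.
have Max_ge1 := MaxProS_ge1 n' d_gt0 d_le1.
exists n'.+1, n'.+2, (tight_instance n' d_gt0 d_le1); split.
  exact: lt_le_trans ltr01 Max_ge1.
move=> Next herf pi /(DA_output_own herf) ->.
have bound_ge0 : 0 <= (1 / n'.+1%:R) ^+ n'.+1 + eps.
  by rewrite addr_ge0 ?exprn_ge0 ?divr_ge0 ?ler0n // ltW.
apply: le_trans (ProS_pi_own_le _ _ _) (le_trans _ (ler_peMr bound_ge0 Max_ge1)).
by rewrite lerD2l.
Qed.
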